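(* Let $N,t\in\mathbb{Z}^+$ with $t\le N$, and let $\boldsymbol{\mu}\in\mathbb{R}_+^N$ satisfy $0<\mu[n]\le1$ for all $n$ and $\sum_{n=1}^N\mu[n]=t$. Run the following procedure: set $\boldsymbol{m}\leftarrow\boldsymbol{\mu}$, $F\leftarrow0$; while $\boldsymbol{m}$ has a nonzero entry: $F\leftarrow F+1$; $t'\leftarrow\sum_n m[n]$; let $\ell[1],\ldots,\ell[N']$ be the indices of the nonzero entries of $\boldsymbol{m}$ ordered so that $m[\ell[1]]\le\cdots\le m[\ell[N']]$; set $\mathcal{N}_F\leftarrow\{\ell[1],\ell[N'-t+2],\ldots,\ell[N']\}$; if $N'\ge t+1$ set $\alpha_F\leftarrow\min\big(\frac{t'}{t}-m[\ell[N'-t+1]],\,m[\ell[1]]\big)$, otherwise set $\alpha_F\leftarrow m[\ell[1]]$; then subtract $\alpha_F$ from $m[n]$ for every $n\in\mathcal{N}_F$. Then this loop terminates with $\boldsymbol{m}=\boldsymbol{0}$ after at most $N$ iterations (i.e., the final $F$ satisfies $F\le N$).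
   Context: This is the storage placement procedure (''Algorithm 1'') for heterogeneous storage-constrained PIR: $\boldsymbol{\mu}$ is the vector of normalized database storage capacities, $t$ their sum, and each iteration $f$ assigns a sub-message set of normalized size $\alpha_f$ to the $t$ databases in $\mathcal{N}_f$ (the database with the smallest remaining nonzero storage and the $t-1$ with the largest remaining storage). *)

From HB Require Import structures.
From mathcomp Require Import all_boot all_order all_algebra.
Set Implicit Arguments. Unset Strict Implicit. Unset Printing Implicit Defensive.
Import Order.TTheory GRing.Theory Num.Theory.
Local Open Scope ring_scope.

(* One iteration of Algorithm 1, as a (nondeterministic, because ties in the
   sorting may be broken arbitrarily) relation between the current storage
   vector [m] and the next one [m'].
   [l = l1 :: s] is the list ell[1], ..., ell[N'] of indices of the nonzero
   entries of m, sorted by nondecreasing value (0-based: ell[k] = nth l1 l (k-1)).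
   N_F = {ell[1]} U {ell[N'-t+2], ..., ell[N']}
       = {l1} U (drop (N' - t + 1) l)                          (0-based).
   alpha_F = min(t'/t - m[ell[N'-t+1]], m[ell[1]])  if N' >= t+1,
           = m[ell[1]]                               otherwise. *)
Definition alg_step (R : realFieldType) (N t : nat) (m m' : 'I_N -> R) : Prop :=
  exists (l1 : 'I_N) (s : seq 'I_N),
    let l := l1 :: s in
    let N' := size l in
    let tp := \sum_(n < N) m n in
    [/\ uniq l,
        (forall i, (i \in l) = (m i != 0)),
        sorted (fun i j => m i <= m j) l &
        let inNF := fun j => (j == l1) || (j \in drop (N' + 1 - t)%N l) in
        let alpha := if (t + 1 <= N')%N
                     then Num.min (tp / t%:R - m (nth l1 l (N' - t)%N)) (m l1)
                     else m l1 in
        forall j, m' j = if inNF j then m j - alpha else m j].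

From HB Require Import structures.
From mathcomp Require Import all_boot all_order all_algebra.
From mathcomp Require Import zify lra.
Import Order.TTheory GRing.Theory Num.Theory.
Set Implicit Arguments.
Unset Strict Implicit.
Unset Printing Implicit Defensive.
Local Open Scope ring_scope.

(* The invariant is admissibility: no entry exceeds the water level t'/t.
   While more than t entries are nonzero, an iteration subtracts alpha from
   exactly t entries, among them every entry already at the level, so those
   stay at the (lowered) level; and either ell[1] is emptied or
   ell[N'-t+1] reaches the new level.  Thus #support - #saturated drops,
   and fewer than t entries can be saturated at that point.  Once at most t
   entries are nonzero, admissibility forces all of them to sit at the
   level, and the iteration clears them all. *)

Lemma mem_drop_uniq (T : eqType) (s : seq T) k x :
  uniq s -> x \in s -> (x \in drop k s) = (k <= index x s)%N.
Proof.
move=> s_uniq xs; rewrite leqNgt -in_take //.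
move: s_uniq xs; rewrite -{1 2}(cat_take_drop k s) cat_uniq mem_cat.
case/and3P=> _ /hasPn disjoint _.
have [xt _|_ /= ->] := boolP (x \in take k s) => //.
by apply/negbTE/negP => /disjoint; rewrite xt.
Qed.

Lemma bounded_descent (T : Type) (P : T -> Prop) (active : pred T)
    (phi : T -> nat) (x : nat -> T) (B : nat) :
  P (x 0%N) -> (phi (x 0%N) <= B)%N ->
  (forall y, P y -> active y -> 0 < phi y)%N ->
  (forall f, P (x f) -> active (x f) ->
     P (x f.+1) /\ (phi (x f.+1) < phi (x f))%N) ->
  exists F,
    [/\ (F <= B)%N, ~~ active (x F) & forall f, (f < F)%N -> active (x f)].
Proof.
move=> P0 phi0 phi_gt0 step.
have descent f : (forall g, g < f -> active (x g))%N ->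
    P (x f) /\ (phi (x f) + f <= phi (x 0%N))%N.
  elim: f => [|f IH] active_before; first by rewrite addn0.
  have [Pf phi_f] := IH (fun g lt_gf => active_before g (ltnW lt_gf)).
  have [Pf1 phi_lt] := step f Pf (active_before f (ltnSn f)).
  by split=> //; rewrite addnS (leq_trans _ phi_f) // ltn_add2r.
pose stopped := [pred g | ~~ active (x g) || (B <= g)%N].
have stopped_B : stopped B by rewrite /= leqnn orbT.
have [F stop minF] := ex_minnP (ex_intro (fun g => stopped g) B stopped_B).
have active_before f : (f < F)%N -> active (x f).
  move=> lt_fF; apply/negPn/negP => inactive.
  by have := minF f; rewrite /stopped /= inactive orTb leqNgt lt_fF => /(_ isT).
exists F; split=> //; first exact: minF.
case/orP: stop => // le_BF; apply/negP => active_F.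
have [PF phi_F] := descent F active_before.
by have := phi_gt0 _ PF active_F; lia.
Qed.

Section WaterLevel.

Variables (R : realFieldType) (N t : nat).

Definition level (m : 'I_N -> R) := (\sum_(n < N) m n) / t%:R.
Definition admissible (m : 'I_N -> R) := forall n, 0 <= m n <= level m.
Definition support (m : 'I_N -> R) := [set n | m n != 0].
Definition saturated (m : 'I_N -> R) := [set n in support m | m n == level m].
(* This is #|support m| - #|saturated m|, except that a nonempty fully
   saturated support (the state before the last iteration) counts 1. *)
Definition potential (m : 'I_N -> R) :=
  (#|support m| - minn #|saturated m| #|support m|.-1)%N.

Lemma potential_gt0 m : support m != set0 -> (0 < potential m)%N.
Proof. by rewrite -card_gt0 /potential; lia. Qed.

Lemma potential_le m : (potential m <= N)%N.
Proof.
by rewrite (leq_trans (leq_subr _ _)) // (leq_trans (max_card _)) ?card_ord.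
Qed.

Hypothesis t_gt0 : (0 < t)%N.

Lemma mulr_level m : t%:R * level m = \sum_(n < N) m n.
Proof. by rewrite mulrC divfK // pnatr_eq0 -lt0n. Qed.

Lemma sum_support m : \sum_(n < N) m n = \sum_(n in support m) m n.
Proof.
by rewrite [RHS]big_mkcond; apply: eq_bigr => n _; rewrite inE; case: eqP.
Qed.

Lemma saturated_sub_support m : saturated m \subset support m.
Proof. by apply/subsetP => n; rewrite inE => /andP[]. Qed.

Section Admissible.

Variable m : 'I_N -> R.
Hypothesis adm : admissible m.

Lemma support_gt0 n : n \in support m -> 0 < m n.
Proof. by rewrite inE lt_def => ->; case/andP: (adm n). Qed.

Lemma level_gt0 n : n \in support m -> 0 < level m.
Proof.
by move=> /support_gt0 mn_gt0; case/andP: (adm n) => _; apply: lt_le_trans.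
Qed.

Lemma sum_support_saturated :
  t%:R * level m =
    #|saturated m|%:R * level m + \sum_(n in support m :\: saturated m) m n.
Proof.
rewrite mulr_level sum_support (big_setID (saturated m)).
rewrite (setIidPr (saturated_sub_support m)) mulr_natl -sumr_const.
by congr (_ + _); apply: eq_bigr => n; rewrite inE => /andP[_ /eqP].
Qed.

Lemma card_saturated_le : (#|saturated m| <= t)%N.
Proof.
have [/eqP ->|/set0Pn [n]] := boolP (saturated m == set0).
  by rewrite cards0.
move=> /(subsetP (saturated_sub_support m)) /level_gt0 level_pos.
rewrite -(ler_nat R) -(ler_pM2r level_pos) sum_support_saturated lerDl.
by apply: sumr_ge0 => i; rewrite inE => /andP[_ /support_gt0 /ltW].
Qed.

Lemma card_saturated_lt :
  (#|saturated m| < #|support m|)%N -> (#|saturated m| < t)%N.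
Proof.
move=> card_lt; have /proper_subn : saturated m \proper support m.
  by rewrite properEcard saturated_sub_support.
rewrite -setD_eq0 => /set0Pn [n nD].
have /level_gt0 level_pos : n \in support m by case/setDP: nD.
rewrite -(ltr_nat R) -(ltr_pM2r level_pos) sum_support_saturated ltrDl.
rewrite lt_def sumr_ge0 ?andbT; last first.
  by move=> i; rewrite inE => /andP[_ /support_gt0 /ltW].
apply/eqP => /psumr_eq0P sum0.
have := support_gt0 (setDP nD).1; rewrite sum0 ?ltxx // => i.
by rewrite inE => /andP[_ /support_gt0 /ltW].
Qed.

Lemma level_ge0 : 0 <= level m.
Proof. by rewrite divr_ge0 // sumr_ge0 // => n _; case/andP: (adm n). Qed.

Lemma small_support_at_level n :
  (#|support m| <= t)%N -> n \in support m -> m n = level m.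
Proof.
move=> card_le n_supp.
have gap_ge0 i : i \in support m -> 0 <= level m - m i.
  by rewrite subr_ge0; case/andP: (adm i).
have gap0 : \sum_(n in support m) (level m - m n) = 0.
  apply/eqP; rewrite eq_le sumr_ge0 ?andbT //.
  rewrite sumrB sumr_const -sum_support -mulr_level -[_ *+ #|_|]mulr_natl.
  by rewrite -mulrBl mulr_le0_ge0 ?level_ge0 // subr_le0 ler_nat.
by move: (psumr_eq0P gap_ge0 gap0 n_supp) => /eqP; rewrite subr_eq0 => /eqP.
Qed.

End Admissible.

Section Step.

Variables (m m' : 'I_N -> R) (A : {set 'I_N}) (alpha : R).
Hypotheses (adm : admissible m) (card_A : #|A| = t) (alpha_gt0 : 0 < alpha).
Hypothesis alpha_le : forall n, n \in A -> alpha <= m n.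
Hypothesis le_level_sub : forall n, n \notin A -> m n <= level m - alpha.
Hypothesis m'E : forall n, m' n = if n \in A then m n - alpha else m n.

Lemma level_step : level m' = level m - alpha.
Proof.
rewrite /level; have -> : \sum_(n < N) m' n = \sum_(n < N) m n - alpha *+ t.
  rewrite -card_A -sumr_const [X in _ - X]big_mkcond -sumrB /=.
  by apply: eq_bigr => n _; rewrite m'E; case: ifP; rewrite ?subr0.
by rewrite mulrBl -[alpha *+ t]mulr_natr mulfK // pnatr_eq0 -lt0n.
Qed.

Lemma admissible_step : admissible m'.
Proof.
move=> n; have /andP[m_ge0 m_le] := adm n.
rewrite level_step m'E; case: ifPn => nA.
  by rewrite subr_ge0 alpha_le //= lerD2r.
by rewrite m_ge0 le_level_sub.
Qed.

Lemma support_step : support m' \subset support m.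
Proof.
apply/subsetP => n; rewrite !inE m'E; case: ifPn => // nA _.
by rewrite gt_eqF // (lt_le_trans alpha_gt0 (alpha_le nA)).
Qed.

Lemma saturated_step : 0 < level m - alpha -> saturated m \subset saturated m'.
Proof.
move=> level'_gt0; apply/subsetP => n; rewrite !inE level_step m'E.
move=> /andP[_ /eqP mn]; case: ifPn => nA; first by rewrite mn eqxx gt_eqF.
have : level m - alpha < level m by rewrite gtrBl.
by rewrite -[X in _ < X]mn ltNge le_level_sub.
Qed.

Lemma potential_step :
  0 < level m - alpha -> (#|saturated m|.+2 <= #|support m|)%N ->
  (exists2 n, n \in support m & n \notin support m') \/
  (exists2 n, n \notin saturated m & n \in saturated m') ->
  (potential m' < potential m)%N.
Proof.
move=> level'_gt0 slack progress.
have supp_le := subset_leq_card support_step.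
have sat_le := subset_leq_card (saturated_step level'_gt0).
have : (#|support m'| < #|support m|)%N || (#|saturated m| < #|saturated m'|)%N.
  case: progress => [[n n_in n_notin]|[n n_notin n_in]];
    apply/orP; [left|right]; apply: proper_card;
    rewrite properE ?support_step ?saturated_step //=;
    by apply/subsetPn; exists n.
rewrite /potential; lia.
Qed.

End Step.

Section SortedSupport.

Variables (m m' : 'I_N -> R) (l1 : 'I_N) (s : seq 'I_N).
Let l := l1 :: s.
Hypotheses (adm : admissible m) (l_uniq : uniq l).
Hypothesis mem_l : forall i, (i \in l) = (m i != 0).
Hypothesis l_sorted : sorted (fun i j => m i <= m j) l.

Let le_m_trans : transitive (fun i j => m i <= m j).
Proof. by move=> j i k; apply: le_trans. Qed.

Let l_nth_le := sorted_leq_nth le_m_trans (fun i => lexx (m i)) l1 l_sorted.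

Lemma card_support_seq : #|support m| = size l.
Proof.
by rewrite -(card_uniqP l_uniq); apply: eq_card => i; rewrite inE mem_l.
Qed.

Lemma head_le j : j \in l -> m l1 <= m j.
Proof.
rewrite inE => /orP[/eqP -> //|js].
by have /allP := order_path_min le_m_trans l_sorted; apply.
Qed.

Lemma nth_le_index i j : j \in l -> (i <= index j l)%N -> m (nth l1 l i) <= m j.
Proof.
move=> jl ij; rewrite -[X in _ <= m X](nth_index l1 jl).
by apply: l_nth_le; rewrite ?inE ?index_mem ?(leq_ltn_trans ij) ?index_mem.
Qed.

Lemma index_le_nth i j :
  j \in l -> (index j l <= i < size l)%N -> m j <= m (nth l1 l i).
Proof.
move=> jl /andP[ji il]; rewrite -[X in m X <= _](nth_index l1 jl).
by apply: l_nth_le; rewrite ?inE ?index_mem.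
Qed.

Lemma small_support_step :
  (size l <= t)%N ->
  (forall j, m' j = if (j == l1) || (j \in drop (size l + 1 - t) l)
                    then m j - m l1 else m j) ->
  forall j, m' j = 0.
Proof.
move=> small m'E j.
have at_level i : i \in l -> m i = level m.
  rewrite mem_l => i_supp.
  by rewrite small_support_at_level ?card_support_seq ?inE.
rewrite m'E; have [jl|jNl] := boolP (j \in l).
  suff -> : (j == l1) || (j \in drop (size l + 1 - t) l).
    by rewrite at_level // at_level ?mem_head // subrr.
  have [//|j_neq_l1 /=] := eqVneq j l1.
  rewrite mem_drop_uniq //= eq_sym (negbTE j_neq_l1); move: small => /=; lia.
have mj0 : m j = 0 by apply/eqP; rewrite -[_ == 0]negbK -mem_l.
case: ifP => // /orP[/eqP jl1|/mem_drop jl]; last by rewrite jl in jNl.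
by rewrite jl1 mem_head in jNl.
Qed.

Section LargeSupport.

Hypothesis large : (t < size l)%N.
Let k := (size l - t)%N.
Let p := nth l1 l k.
Let A := [set j | (j == l1) || (j \in drop k.+1 l)].
Let alpha := Num.min (level m - m p) (m l1).

Let k_gt0 : (0 < k)%N. Proof. by rewrite subn_gt0. Qed.
Let k_lt : (k < size l)%N. Proof. by rewrite /k; lia. Qed.
Let p_in_l : p \in l. Proof. exact: mem_nth. Qed.

Let support_l j : (j \in support m) = (j \in l).
Proof. by rewrite inE mem_l. Qed.

Let A_sub_l j : j \in A -> j \in l.
Proof. by rewrite inE => /orP[/eqP ->|/mem_drop]; rewrite ?mem_head. Qed.

Let card_A : #|A| = t.
Proof.
have A_uniq : uniq (l1 :: drop k.+1 l).
  move: l_uniq => /= /andP[l1_notin_s s_uniq].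
  by rewrite drop_uniq ?andbT //; apply: contra l1_notin_s => /mem_drop.
have -> : A = [set j in l1 :: drop k.+1 l] by apply/setP => j; rewrite !inE.
by rewrite cardsE (card_uniqP A_uniq) /= size_drop /k; move: large => /=; lia.
Qed.

Let card_saturated_lt_t : (#|saturated m| < t)%N.
Proof.
apply: card_saturated_lt => //.
by rewrite card_support_seq (leq_ltn_trans (card_saturated_le adm)).
Qed.

Let p_lt_level : m p < level m.
Proof.
rewrite ltNge; apply/negP => level_le_p.
have : [set j in drop k l] \subset saturated m.
  apply/subsetP => j; rewrite inE => jd; have jl := mem_drop jd.
  have p_le_j : m p <= m j by apply: nth_le_index; rewrite -?mem_drop_uniq.
  rewrite !inE -mem_l jl eq_le; have /andP[_ ->] := adm j.
  exact: le_trans level_le_p p_le_j.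
move=> /subset_leq_card; rewrite cardsE (card_uniqP (drop_uniq _ l_uniq)).
by rewrite size_drop /k subKn ?(ltnW large) // leqNgt card_saturated_lt_t.
Qed.

Let alpha_gt0 : 0 < alpha.
Proof.
by rewrite lt_min subr_gt0 p_lt_level support_gt0 ?support_l ?mem_head.
Qed.

Let alpha_le_l1 : alpha <= m l1. Proof. by rewrite ge_min lexx orbT. Qed.
Let alpha_le_gap : alpha <= level m - m p. Proof. by rewrite ge_min lexx. Qed.

Let level_sub_alpha_gt0 : 0 < level m - alpha.
Proof.
rewrite subr_gt0 (le_lt_trans alpha_le_l1) // (le_lt_trans _ p_lt_level) //.
exact: head_le.
Qed.

Let alpha_le j : j \in A -> alpha <= m j.
Proof. by move=> /A_sub_l /head_le; apply: le_trans. Qed.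

Let le_level_sub j : j \notin A -> m j <= level m - alpha.
Proof.
move=> jNA; have [jl|jNl] := boolP (j \in l); last first.
  by move: jNl; rewrite mem_l negbK => /eqP ->; apply: ltW.
have p_le : m p <= level m - alpha by move: alpha_le_gap; lra.
apply: le_trans p_le; apply: index_le_nth => //.
rewrite k_lt andbT leqNgt -(mem_drop_uniq _ l_uniq jl).
by move: jNA; rewrite inE negb_or => /andP[_].
Qed.

Let p_notin_A : p \notin A.
Proof.
rewrite inE negb_or -[X in _ == X]/(nth l1 l 0) nth_uniq // -lt0n k_gt0 andTb.
by rewrite /p mem_drop_uniq // index_uniq // ltnn.
Qed.

Lemma large_support_step :
  (forall j, m' j = if j \in A then m j - alpha else m j) ->
  admissible m' /\ (potential m' < potential m)%N.
Proof.
move=> m'E; split.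
  exact: admissible_step adm card_A alpha_le le_level_sub m'E.
apply: (potential_step card_A alpha_gt0 alpha_le le_level_sub m'E) => //.
  by rewrite card_support_seq (leq_trans _ large).
have [l1_le_gap|gap_lt_l1] := leP (m l1) (level m - m p).
  left; exists l1; first by rewrite support_l mem_head.
  by rewrite inE m'E inE eqxx /alpha (min_r l1_le_gap) subrr eqxx.
right; exists p; first by rewrite inE (lt_eqF p_lt_level) andbF.
rewrite inE [_ \in support _]inE (level_step card_A m'E) m'E (negbTE p_notin_A).
by rewrite /alpha (min_l (ltW gap_lt_l1)) subKr -mem_l p_in_l eqxx.
Qed.

End LargeSupport.

End SortedSupport.

Lemma alg_step_potential m m' :
  admissible m -> support m != set0 -> alg_step t m m' ->
  admissible m' /\ (potential m' < potential m)%N.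
Proof.
move=> adm supp_m [l1 [s [l_uniq mem_l l_sorted m'E]]].
have [large|small] := ltnP t (size (l1 :: s)).
  apply: (large_support_step adm l_uniq mem_l l_sorted large) => j.
  by rewrite m'E !addn1 large subSn 1?ltnW // inE.
have m'0 : forall j, m' j = 0.
  apply: (small_support_step adm l_uniq mem_l small) => j.
  by rewrite m'E !addn1 ltnNge small.
split; first by move=> n; rewrite /level big1 // m'0 mul0r lexx.
have supp_m'0 : support m' = set0 by apply/setP => j; rewrite !inE m'0 eqxx.
by rewrite [potential m']/potential supp_m'0 cards0 potential_gt0.
Qed.

End WaterLevel.

Theorem theorem3 (R : realFieldType) (N t : nat) (mu : 'I_N -> R) :
  (0 < t)%N -> (t <= N)%N ->
  (forall n, 0 < mu n <= 1) ->
  \sum_(n < N) mu n = t%:R ->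
  forall run : nat -> ('I_N -> R),
    (forall n, run 0%N n = mu n) ->
    (forall f, (exists n, run f n != 0) -> alg_step t (run f) (run f.+1)) ->
    exists F : nat,
      [/\ (F <= N)%N,
          (forall n, run F n = 0) &
          (forall f, (f < F)%N -> exists n, run f n != 0)].
Proof.
move=> t_gt0 _ mu_range mu_sum run run0 run_step.
have adm0 : admissible t (run 0%N).
  move=> n; rewrite /level (eq_bigr _ (fun n _ => run0 n)) mu_sum.
  rewrite divff ?run0 //.
    by case/andP: (mu_range n) => /ltW ->.
  by rewrite pnatr_eq0 -lt0n.
have step f : admissible t (run f) -> support (run f) != set0 ->
    admissible t (run f.+1) /\ (potential t (run f.+1) < potential t (run f))%N.
  move=> adm /[dup] active /set0Pn [n]; rewrite inE => run_fn.
  by apply: alg_step_potential => //; apply: run_step; exists n.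
have [F [le_FN stop active_before]] := bounded_descent adm0 (potential_le _ _)
  (fun m _ => @potential_gt0 _ _ t m) step.
exists F; split=> // [n|f /active_before /set0Pn [n]].
  by move: stop; rewrite negbK => /eqP/setP/(_ n); rewrite !inE => /negbFE/eqP.
by rewrite inE; exists n.
Qed.
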